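(* Let $p$ be a prime and let $(\mathcal G,\mathbf x)$ and $(\mathcal H,\mathbf y)$ be similar finite $p$-rigid multi-sorted relational structures, each with $r$ distinguished vertices. Then $(\mathcal G,\mathbf x)\cong(\mathcal H,\mathbf y)$ if and only if $$\mathrm{hom}((\mathcal K,\mathbf z),(\mathcal G,\mathbf x))\equiv\mathrm{hom}((\mathcal K,\mathbf z),(\mathcal H,\mathbf y))\pmod p$$ for every similar finite multi-sorted structure $(\mathcal K,\mathbf z)$ with $r$ distinguished vertices.
   Context: A multi-sorted structure with $r$ distinguished vertices $(\mathcal G,\mathbf x)$ is a multi-sorted structure $\mathcal G$ (pairwise disjoint sorts $G_1,\dots,G_k$, relations of fixed types) together with an $r$-tuple $\mathbf x=(x_1,\dots,x_r)$ of elements (possibly of different sorts, with a fixed sort pattern common to similar structures). Homomorphisms $(\mathcal K,\mathbf z)\to(\mathcal G,\mathbf x)$ are homomorphisms $\varphi=\{\varphi_i\}$ of multi-sorted structures (sort-preserving maps preserving all relations) with $\varphi(z_j)=x_j$ for all $j$; $\mathrm{hom}$ counts them; isomorphisms and automorphisms are defined accordingly. $(\mathcal G,\mathbf x)$ is $p$-rigid if it has no automorphism $\pi=\{\pi_i\}$ of order $p$ (each $\pi_i$ identity or of order $p$, not all identity) fixing all distinguished vertices. *)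

From mathcomp Require Import all_boot.
Set Implicit Arguments. Unset Strict Implicit. Unset Printing Implicit Defensive.

(* A signature (similarity type) of multi-sorted relational structures with
   distinguished vertices: [nsorts] sorts, [nrels] relation symbols, relation
   symbol [i] has type [rtype i] (a list of sorts), and the distinguished
   vertices have the sort pattern [dsorts] (so r = size dsorts). *)
Record signature := Signature {
  nsorts : nat;
  nrels : nat;
  rtype : 'I_nrels -> seq 'I_nsorts;
  dsorts : seq 'I_nsorts
}.

(* A finite multi-sorted structure with distinguished vertices.  The pairwise
   disjoint sorts G_1,...,G_k are represented as the fibres of [srt] on a
   single finite carrier (their disjoint union). *)
Unset Implicit Arguments.
Record mstruct (S : signature) := MStruct {
  carrier : finType;
  srt : carrier -> 'I_(nsorts S);
  rel : forall i : 'I_(nrels S), pred ((size (@rtype S i)).-tuple carrier);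
  rel_typed : forall (i : 'I_(nrels S)) (t : (size (@rtype S i)).-tuple carrier), rel i t -> map srt t = @rtype S i;
  dist : (size (@dsorts S)).-tuple carrier;
  dist_typed : map srt dist = @dsorts S
}.

Set Implicit Arguments.
Arguments carrier {S} _.
Arguments srt {S} _ _.
Arguments rel {S} _ _ _.
Arguments dist {S} _.

Definition is_hom (S : signature) (K G : mstruct S) (f : carrier K -> carrier G) : bool :=
  [&& [forall v, srt G (f v) == srt K v],
      [forall i, forall t, rel K i t ==> rel G i (map_tuple f t)] &
      map f (dist K) == dist G].

Arguments is_hom {S} K G f.

Definition hom (S : signature) (K G : mstruct S) : nat :=
  #|[pred f : {ffun carrier K -> carrier G} | is_hom K G f]|.

Definition isomorphic (S : signature) (G H : mstruct S) : Prop :=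
  exists (f : carrier G -> carrier H) (g : carrier H -> carrier G),
    [/\ cancel f g, cancel g f, is_hom G H f & is_hom H G g].

Definition order_on_sort (S : signature) (G : mstruct S)
    (pi : carrier G -> carrier G) (s : 'I_(nsorts S)) (p : nat) : Prop :=
  (forall v, srt G v = s -> iter p pi v = v) /\
  (forall n, 0 < n < p -> exists v, srt G v = s /\ iter n pi v <> v).

Arguments order_on_sort {S} G pi s p.

(* automorphism of order p (fixing all distinguished vertices, which is part
   of being a homomorphism of structures with distinguished vertices) *)
Definition aut_of_order (p : nat) (S : signature) (G : mstruct S)
    (pi : carrier G -> carrier G) : Prop :=
  (exists pinv : carrier G -> carrier G,
     [/\ cancel pi pinv, cancel pinv pi, is_hom G G pi & is_hom G G pinv]) /\
  (forall s : 'I_(nsorts S),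
     (forall v, srt G v = s -> pi v = v) \/ order_on_sort G pi s p) /\
  (exists v, pi v <> v).

Arguments aut_of_order p {S} G pi.

Definition p_rigid (p : nat) (S : signature) (G : mstruct S) : Prop :=
  ~ exists pi, aut_of_order p G pi.

(* Sorting the homomorphisms K -> G by their kernels gives
   hom(K, G) = sum over the sort-respecting equivalences e on K of inj(K/e, G),
   where inj counts injective homomorphisms.  The quotients by nontrivial e are
   smaller than K, so by induction on |K| hom-congruence mod p implies
   inj-congruence mod p.  Now inj(G, G) is the order of the automorphism group
   of G; if p divided it, Cauchy's theorem would give an automorphism of order
   p, which on each sort is either trivial or of order exactly p (p is prime),
   contradicting p-rigidity.  Hence inj(G, H) = inj(G, G) is nonzero mod p,
   and symmetrically, so there are injective homomorphisms both ways; for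
   finite structures these force an isomorphism. *)

From Pilot Require Import Defs.
From mathcomp Require Import all_boot all_fingroup all_solvable.
Set Implicit Arguments. Unset Strict Implicit. Unset Printing Implicit Defensive.

Lemma card_in_bij (T1 T2 : finType) (A : {pred T1}) (B : {pred T2})
    (f : T1 -> T2) (g : T2 -> T1) :
  {in A, forall x, f x \in B} -> {in B, forall y, g y \in A} ->
  {in A, cancel f g} -> {in B, cancel g f} -> #|A| = #|B|.
Proof.
move=> fAB gBA fK gK; rewrite -(card_in_imset (can_in_inj fK)).
apply: eq_card => y; apply/imsetP/idP => [[x Ax ->] | By]; first exact: fAB.
by exists (g y); rewrite ?gBA ?gK.
Qed.

Lemma map_tuple_comp (T1 T2 T3 : Type) n (f : T1 -> T2) (g : T2 -> T3)
    (t : n.-tuple T1) :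
  map_tuple (g \o f) t = map_tuple g (map_tuple f t).
Proof. by apply: val_inj; rewrite /= map_comp. Qed.

Lemma map_tuple_inj (T1 T2 : Type) n (f : T1 -> T2) :
  injective f -> injective (@map_tuple n _ _ f).
Proof.
by move=> finj t1 t2 /(congr1 val) /inj_map t12; apply: val_inj; apply: t12.
Qed.

Lemma prime_order_perm_moves (T : finType) (x : {perm T}) p n w :
  prime p -> #[x]%g = p -> 0 < n < p -> x w != w -> iter n x w != w.
Proof.
move=> p_pr ox /andP [n_gt0 n_ltp]; apply: contra => /eqP xnw.
have coxn : coprime #|<[x]>%g| n by rewrite -orderE ox prime_coprime // gtnNdvd.
have fix_pow (y : {perm T}) m : y w = w -> (y ^+ m)%g w = w.
  move=> yw; elim: m => [|m IHm]; first by rewrite expg0 perm1.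
  by rewrite expgS permM yw IHm.
by rewrite -{1}(expgK coxn (cycle_id x)) fix_pow ?permX.
Qed.

Section Homomorphisms.
Variable S : signature.
Implicit Types K G H : mstruct S.

Definition injhom K G :=
  #|[pred f : {ffun carrier K -> carrier G} | is_hom K G f && injectiveb f]|.

Lemma is_homP K G (f : carrier K -> carrier G) :
  reflect [/\ forall v, srt G (f v) = srt K v,
              forall i t, Defs.rel K i t -> Defs.rel G i (map_tuple f t)
            & map f (dist K) = dist G]
          (is_hom K G f).
Proof.
apply: (iffP and3P) => [[/forallP fs /forallP fr /eqP fd] | [fs fr fd]].
  split=> // [v | i t]; first exact/eqP.
  by move: (fr i) => /forallP /(_ t) /implyP.
split; last exact/eqP.
  by apply/forallP => v; apply/eqP.
by apply/forallP => i; apply/forallP => t; apply/implyP/fr.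
Qed.

Lemma eq_is_hom K G (f g : carrier K -> carrier G) :
  f =1 g -> is_hom K G f = is_hom K G g.
Proof.
suff imp (f1 f2 : carrier K -> carrier G) :
    f1 =1 f2 -> is_hom K G f1 -> is_hom K G f2.
  by move=> fg; apply/idP/idP; apply: imp => // v; rewrite fg.
move=> fg /is_homP [fs fr fd]; apply/is_homP; split.
- by move=> v; rewrite -fg.
- by move=> i t /fr; congr (Defs.rel _ _ _); apply: val_inj; apply: eq_map.
- by rewrite -(eq_map fg).
Qed.

Lemma is_hom_id G : is_hom G G id.
Proof.
apply/is_homP; split=> [// | i t | ]; last exact: map_id.
by have -> : map_tuple id t = t by apply: val_inj; apply: map_id.
Qed.

Lemma is_hom_comp K G H f g :
  is_hom K G f -> is_hom G H g -> is_hom K H (g \o f).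
Proof.
move=> /is_homP [fs fr fd] /is_homP [gs gr gd]; apply/is_homP; split.
- by move=> v /=; rewrite gs fs.
- by move=> i t /fr /gr; rewrite map_tuple_comp.
- by rewrite map_comp fd gd.
Qed.

Lemma isomorphic_hom K G H : isomorphic G H -> hom K G = hom K H.
Proof.
case=> f [g [fK gK homf homg]]; rewrite /hom.
apply: (card_in_bij (f := fun h : {ffun _ -> _} => [ffun v => f (h v)])
                    (g := fun h : {ffun _ -> _} => [ffun v => g (h v)]))
  => h; rewrite !inE.
- rewrite (eq_is_hom (g := f \o h)) => [homh | v]; last by rewrite ffunE.
  exact: is_hom_comp homh homf.
- rewrite (eq_is_hom (g := g \o h)) => [homh | v]; last by rewrite ffunE.
  exact: is_hom_comp homh homg.
- by move=> _; apply/ffunP => v; rewrite !ffunE fK.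
- by move=> _; apply/ffunP => v; rewrite !ffunE gK.
Qed.

Definition hom_ker K G (f : carrier K -> carrier G) :
  {ffun carrier K -> {set carrier K}} := [ffun v => [set u | f u == f v]].

Definition sort_equiv K (e : {ffun carrier K -> {set carrier K}}) :=
  [forall v, v \in e v] &&
  [forall u, forall v, (u \in e v) ==> (e u == e v) && (srt K u == srt K v)].

Definition diag_equiv K : {ffun carrier K -> {set carrier K}} :=
  [ffun v => [set v]].

Lemma hom_ker_sort_equiv K G f : is_hom K G f -> sort_equiv (hom_ker f).
Proof.
case/is_homP => fs _ _; apply/andP; split.
  by apply/forallP => v; rewrite ffunE inE.
apply/forallP => u; apply/forallP => v; apply/implyP; rewrite ffunE inE.
move=> /eqP fuv; apply/andP; split; last by rewrite -fs fuv fs.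
by apply/eqP/setP => z; rewrite !ffunE !inE fuv.
Qed.

Lemma diag_sort_equiv K : sort_equiv (diag_equiv K).
Proof.
apply/andP; split; first by apply/forallP => v; rewrite ffunE inE.
apply/forallP => u; apply/forallP => v; apply/implyP.
by rewrite !ffunE inE => /eqP->; rewrite !eqxx.
Qed.

Lemma hom_ker_diag K G (f : carrier K -> carrier G) :
  (hom_ker f == diag_equiv K) = injectiveb f.
Proof.
apply/eqP/injectiveP => [kerf u v fuv | finj].
  move/ffunP/(_ v): kerf; rewrite !ffunE => /setP /(_ u).
  by rewrite !inE fuv eqxx => /esym/eqP.
apply/ffunP => v; rewrite !ffunE.
by apply/setP => u; rewrite !inE (inj_eq finj).
Qed.

Section Quotient.
Variables (K : mstruct S) (e : {ffun carrier K -> {set carrier K}}).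

(* A point of K/e is a class of e paired with a sort, so that the sort map of
   K/e is defined without assuming that e respects sorts. *)
Definition quot_point v := (e v, srt K v).

Definition quot_carrier :=
  {x : {set carrier K} * 'I_(nsorts S) | [exists v, quot_point v == x]}.

Lemma quot_pointP v : [exists u, quot_point u == quot_point v].
Proof. by apply/existsP; exists v. Qed.

Definition quot_map v : quot_carrier := exist _ (quot_point v) (quot_pointP v).

Definition quot_srt (x : quot_carrier) := (val x).2.

Definition quot_rel i (T : (size (rtype i)).-tuple quot_carrier) :=
  [exists t, Defs.rel K i t && (map_tuple quot_map t == T)].
Arguments quot_rel : clear implicits.

Lemma quot_rel_typed i T : quot_rel i T -> map quot_srt T = rtype i.
Proof.
case/existsP => t /andP [relt /eqP <-]; rewrite /= -map_comp.
exact: rel_typed relt.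
Qed.

Lemma quot_dist_typed : map quot_srt (map_tuple quot_map (dist K)) = dsorts S.
Proof. by rewrite /= -map_comp; apply: dist_typed. Qed.

Definition quot : mstruct S :=
  @MStruct S quot_carrier quot_srt quot_rel quot_rel_typed _ quot_dist_typed.

Definition quot_repr (x : quot_carrier) : carrier K :=
  xchoose (elimT existsP (valP x)).

Lemma quot_reprK : cancel quot_repr quot_map.
Proof.
by move=> x; apply: val_inj; apply/eqP/(xchooseP (elimT existsP (valP x))).
Qed.

Lemma quot_map_hom : is_hom K quot quot_map.
Proof.
apply/is_homP; split=> // i t relt.
by apply/existsP; exists t; rewrite relt eqxx.
Qed.

Hypothesis e_equiv : sort_equiv e.

Lemma eq_quot_map u v : (quot_map u == quot_map v) = (u \in e v).
Proof.
case/andP: e_equiv => /forallP e_refl /forallP e_class.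
rewrite -val_eqE /= /quot_point xpair_eqE.
apply/andP/idP => [[/eqP <- _] | uv]; first exact: e_refl.
by apply/andP; move: (e_class u) => /forallP /(_ v) /implyP /(_ uv).
Qed.

Variable G : mstruct S.

Lemma hom_ker_comp_quot (g : carrier quot -> carrier G) :
  injective g -> hom_ker (g \o quot_map) = e.
Proof.
move=> ginj; apply/ffunP => v; rewrite ffunE; apply/setP => u.
by rewrite inE /= (inj_eq ginj) eq_quot_map.
Qed.

Section Factorization.
Variable f : carrier K -> carrier G.
Hypothesis kerf : hom_ker f = e.

Lemma quot_reprK_ker v : f (quot_repr (quot_map v)) = f v.
Proof.
have : quot_repr (quot_map v) \in e v by rewrite -eq_quot_map quot_reprK.
by rewrite -kerf ffunE inE => /eqP.
Qed.

Lemma quot_factor_inj : injective (f \o quot_repr).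
Proof.
move=> x y /= fxy; rewrite -(quot_reprK x) -(quot_reprK y); apply/eqP.
by rewrite eq_quot_map -kerf ffunE inE fxy.
Qed.

Lemma quot_factor_hom : is_hom K G f -> is_hom quot G (f \o quot_repr).
Proof.
have fq n (t : n.-tuple (carrier K)) :
    map_tuple (f \o quot_repr) (map_tuple quot_map t) = map_tuple f t.
  rewrite -map_tuple_comp; apply: val_inj.
  by apply: eq_map => v /=; rewrite quot_reprK_ker.
case/is_homP => fs fr fd; apply/is_homP; split.
- by move=> x /=; rewrite fs -{2}(quot_reprK x).
- by move=> i _ /existsP [t /andP [relt /eqP <-]]; rewrite fq; apply: fr.
- by rewrite -[map _ _]/(val (map_tuple _ (map_tuple _ _))) fq.
Qed.

End Factorization.

Lemma card_hom_ker :
  #|[pred f : {ffun carrier K -> carrier G}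
              | is_hom K G f && (hom_ker f == e)]| = injhom quot G.
Proof.
symmetry; apply: (card_in_bij
  (f := fun g : {ffun _ -> _} => [ffun v => g (quot_map v)])
  (g := fun f : {ffun _ -> _} => [ffun x => f (quot_repr x)])).
- move=> g; rewrite !inE => /andP [homg /injectiveP ginj].
  rewrite (eq_is_hom (g := g \o quot_map)) => [|v]; last by rewrite ffunE.
  rewrite (is_hom_comp quot_map_hom homg) /=; apply/eqP.
  apply: etrans (hom_ker_comp_quot ginj); apply/ffunP => v.
  by rewrite !ffunE; apply/setP => u; rewrite !inE !ffunE.
- move=> f; rewrite !inE => /andP [homf /eqP kerf]; apply/andP; split.
    rewrite (eq_is_hom (g := f \o quot_repr : carrier quot -> _)) => [|x].
      exact: quot_factor_hom.
    by rewrite ffunE.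
  by apply/injectiveP => x y; rewrite !ffunE; apply: quot_factor_inj.
- by move=> g _; apply/ffunP => x; rewrite !ffunE quot_reprK.
- move=> f; rewrite inE => /andP [_ /eqP kerf].
  by apply/ffunP => v; rewrite !ffunE quot_reprK_ker.
Qed.

End Quotient.

Lemma card_quot_lt K e : sort_equiv e -> e != diag_equiv K ->
  #|carrier (quot e)| < #|carrier K|.
Proof.
move=> e_equiv; apply: contraR; rewrite -leqNgt => cardK.
have [q reprK qK] := inj_card_bij (can_inj (@quot_reprK K e)) cardK.
have mapq u : quot_map e u = q u by rewrite -(qK u) quot_reprK.
apply/eqP/ffunP => v; rewrite ffunE; apply/setP => u; rewrite inE.
by rewrite -eq_quot_map // !mapq (inj_eq (can_inj qK)).
Qed.

Lemma hom_sum_injhom K G :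
  hom K G = injhom K G
            + \sum_(e | sort_equiv e && (e != diag_equiv K)) injhom (quot e) G.
Proof.
have -> : hom K G = \sum_(e | sort_equiv e)
    #|[pred f : {ffun carrier K -> carrier G}
                | is_hom K G f && (hom_ker f == e)]|.
  rewrite /hom -sum1_card.
  rewrite (partition_big (fun f : {ffun _ -> _} => hom_ker f) (@sort_equiv K)).
    apply: eq_bigr => e _; rewrite -sum1_card.
    by apply: eq_bigl => f; rewrite !inE.
  by move=> f; rewrite inE => /hom_ker_sort_equiv.
rewrite (bigD1 (diag_equiv K)) ?diag_sort_equiv //=; congr (_ + _).
  by apply: eq_card => f; rewrite !inE hom_ker_diag.
by apply: eq_bigr => e /andP [e_equiv _]; apply: card_hom_ker.
Qed.

Lemma injhom_congr p G H :
  (forall K, hom K G = hom K H %[mod p]) ->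
  forall K, injhom K G = injhom K H %[mod p].
Proof.
move=> homGH K; have [n cardK] := ubnP #|carrier K|.
elim: n => // n IHn in K cardK *.
have sumGH :
    \sum_(e | sort_equiv e && (e != diag_equiv K)) injhom (quot e) G =
    \sum_(e | sort_equiv e && (e != diag_equiv K)) injhom (quot e) H %[mod p].
  rewrite -modn_summ -[RHS]modn_summ; congr (_ %% p).
  apply: eq_bigr => e /andP [e_equiv e_ndiag]; apply: IHn.
  exact: leq_trans (card_quot_lt e_equiv e_ndiag) _.
have := homGH K; rewrite !hom_sum_injhom -modnDmr sumGH modnDmr.
by move/eqP; rewrite eqn_modDr => /eqP.
Qed.

Section Automorphisms.
Variable G : mstruct S.

Definition aut_set := [set x : {perm carrier G} | is_hom G G x].

Lemma aut_group_set : group_set aut_set.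
Proof.
apply/group_setP; split => [|x y]; rewrite !inE.
  by rewrite (eq_is_hom (g := id)) ?is_hom_id // => v; rewrite perm1.
move=> homx homy; rewrite (eq_is_hom (g := y \o x)) => [|v].
  exact: is_hom_comp.
by rewrite permM.
Qed.

Canonical aut_group := Group aut_group_set.

Lemma card_aut : #|aut_set| = injhom G G.
Proof.
have ffun_inj : {in aut_set &, injective (fun x : {perm _} => [ffun v => x v])}.
  by move=> x y _ _ /ffunP xy; apply/permP => v; move: (xy v); rewrite !ffunE.
rewrite -(card_in_imset ffun_inj); apply: eq_card => f; rewrite inE.
apply/imsetP/andP => [[x] | [homf /injectiveP finj]].
  rewrite inE => homx ->.
  rewrite (eq_is_hom (g := x)) => [|v]; last by rewrite ffunE.
  by split=> //; apply/injectiveP => u v; rewrite !ffunE; apply: perm_inj.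
exists (perm finj); last by apply/ffunP => v; rewrite ffunE permE.
by rewrite inE (eq_is_hom (g := f)) // => v; rewrite permE.
Qed.

Lemma prime_order_aut_of_order p x :
  prime p -> x \in aut_group -> #[x]%g = p -> aut_of_order p G x.
Proof.
move=> p_pr autx ox; split; [|split].
- exists (x^-1)%g; split; [exact: permK | exact: permKV | |].
    by move: autx; rewrite inE.
  by move: autx; rewrite -groupV inE.
- move=> s; have [xs | ] := boolP [forall v, (srt G v == s) ==> (x v == v)].
    by left=> v vs; apply/eqP; move/forallP/(_ v): xs; rewrite vs eqxx.
  case/forallPn => w; rewrite negb_imply => /andP [/eqP ws xw]; right; split.
    by move=> v _; rewrite -permX -ox expg_order perm1.
  by move=> n np; exists w; split=> //; apply/eqP/(prime_order_perm_moves p_pr).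
- have [v /eqP xv | x_id] := pickP (fun v => x v != v); first by exists v.
  have x1 : x = 1%g by apply/permP => v; rewrite perm1; apply/eqP/negbFE/x_id.
  by move: p_pr; rewrite -ox x1 order1.
Qed.

Lemma p_rigid_injhom p : prime p -> p_rigid p G -> ~~ (p %| injhom G G).
Proof.
move=> p_pr rigidG; apply/negP; rewrite -card_aut => /(Cauchy p_pr) [x autx ox].
by apply: rigidG; exists x; apply: prime_order_aut_of_order.
Qed.

End Automorphisms.

Lemma embedding_of_injhom K G :
  injhom K G != 0 ->
  exists2 f : carrier K -> carrier G, is_hom K G f & injective f.
Proof.
rewrite -lt0n => /card_gt0P [f]; rewrite inE => /andP [homf /injectiveP finj].
by exists f.
Qed.

Section MutualEmbeddings.
Variables (G H : mstruct S).
Variables (f : carrier G -> carrier H) (g : carrier H -> carrier G).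
Hypotheses (homf : is_hom G H f) (finj : injective f).
Hypotheses (homg : is_hom H G g) (ginj : injective g).

(* f and g inject the i-th relation of each structure into that of the other,
   so by finiteness f maps it onto the i-th relation of H. *)
Lemma embedding_rel_onto i T :
  Defs.rel H i T -> exists2 t, Defs.rel G i t & T = map_tuple f t.
Proof.
case/is_homP: homf => _ fr _; case/is_homP: homg => _ gr _.
pose relG := [set t | Defs.rel G i t]; pose relH := [set t | Defs.rel H i t].
have f_relG : [set map_tuple f t | t in relG] \subset relH.
  by apply/subsetP => y /imsetP [t]; rewrite inE => /fr relft ->; rewrite inE.
have g_relH : [set map_tuple g t | t in relH] \subset relG.
  by apply/subsetP => y /imsetP [t]; rewrite inE => /gr relgt ->; rewrite inE.
have card_relH : #|relH| <= #|relG|.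
  by rewrite -(card_imset _ (map_tuple_inj ginj)) subset_leq_card.
have f_relG_onto : [set map_tuple f t | t in relG] = relH.
  by apply/eqP; rewrite eqEcard f_relG card_imset //; apply: map_tuple_inj.
move=> relT; have : T \in relH by rewrite inE.
by rewrite -f_relG_onto => /imsetP [t]; rewrite inE; exists t.
Qed.

Lemma mutual_embeddings_isomorphic : isomorphic G H.
Proof.
have [f' fK f'K] : bijective f.
  by apply: inj_card_bij; rewrite ?(leq_card _ ginj).
exists f, f'; split=> //; case/is_homP: homf => fs _ fd; apply/is_homP; split.
- by move=> w; rewrite -{2}(f'K w) fs.
- move=> i _ /embedding_rel_onto [t relt ->].
  suff -> : map_tuple f' (map_tuple f t) = t by [].
  by apply: val_inj; rewrite /= -map_comp (eq_map fK) map_id.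
- by rewrite -fd -map_comp (eq_map fK) map_id.
Qed.

End MutualEmbeddings.

End Homomorphisms.

Theorem lemmaA3 (p : nat) (S : signature) (G H : mstruct S) :
  prime p -> p_rigid p G -> p_rigid p H ->
  (isomorphic G H <-> forall K : mstruct S, hom K G = hom K H %[mod p]).
Proof.
move=> p_pr rigidG rigidH; split=> [isoGH K | homGH].
  by rewrite (isomorphic_hom K isoGH).
have injGH := injhom_congr homGH.
have [f homf finj] : exists2 f, is_hom G H f & injective f.
  apply: embedding_of_injhom; apply: contraNneq (p_rigid_injhom p_pr rigidG).
  by move=> injGH0; rewrite /dvdn (injGH G) injGH0 mod0n.
have [g homg ginj] : exists2 g, is_hom H G g & injective g.
  apply: embedding_of_injhom; apply: contraNneq (p_rigid_injhom p_pr rigidH).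
  by move=> injHG0; rewrite /dvdn -(injGH H) injHG0 mod0n.
exact: mutual_embeddings_isomorphic homf finj homg ginj.
Qed.
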